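(* Let $\lambda$ be a limit ordinal and $(X_\mu,T)_{\mu\le\lambda}$ minimal systems such that $(X_\lambda,T)$ is the inverse limit of $(X_\mu,T)_{\mu<\lambda}$ with respect to factor maps $\phi_{\mu,\nu}:X_\nu\to X_\mu$ ($\mu\le\nu<\lambda$). Then for every $d\in\mathbb{N}$, $(N_d(X_\lambda),\mathcal{G}_d(T))$ is the inverse limit of $(N_d(X_\mu),\mathcal{G}_d(T))_{\mu<\lambda}$ with respect to the induced maps $\phi_{\mu,\nu}^{(d)}$.
   Context: $N_d(Z)=\overline{\{(T^{p+q}z,\dots,T^{p+dq}z):z\in Z,p,q\in\mathbb{Z}\}}$; $\mathcal{G}_d(T)=\langle T\times\cdots\times T,\ T\times T^2\times\cdots\times T^d\rangle$; $\phi^{(d)}=\phi\times\cdots\times\phi$. *)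

From HB Require Import structures.
From mathcomp Require Import all_boot all_order all_algebra.
From mathcomp Require Import all_classical all_reals all_analysis.
Set Implicit Arguments. Unset Strict Implicit. Unset Printing Implicit Defensive.
Import Order.TTheory GRing.Theory Num.Theory.
Local Open Scope classical_set_scope.
Local Open Scope ring_scope.

Definition tpow (X : Type) (T Tinv : X -> X) (n : int) : X -> X :=
  match n with
  | Posz k => iter k T
  | Negz k => iter k.+1 Tinv
  end.

Definition tds (X : topologicalType) (T Tinv : X -> X) : Prop :=
  [/\ compact [set: X], hausdorff_space X,
      continuous T, continuous Tinv &
      cancel T Tinv /\ cancel Tinv T].

Definition minimal (X : topologicalType) (T : X -> X) : Prop :=
  forall A : set X, closed A -> A !=set0 -> T @` A = A -> A = [set: X].

Definition factor_map (Y X : topologicalType) (S : Y -> Y) (T : X -> X)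
  (f : Y -> X) : Prop :=
  [/\ continuous f, f @` [set: Y] = [set: X] & forall y, f (S y) = T (f y)].

(** (B, psi) is the inverse limit of the inverse system (A_mu, phi_{mu,nu})_{mu in I}:
    the bonding maps send A_nu onto A_mu, are the identity for mu = nu and compose;
    the maps psi_mu send B onto A_mu and are compatible with the bonding maps; and
    every compatible thread (x_mu in A_mu) has a unique lift y in B.  (For compact
    Hausdorff spaces and continuous maps this bijection onto the thread space is
    automatically a homeomorphism.) *)
Definition inverse_limit {dI : Order.disp_t} {I : porderType dI} (X : I -> Type)
  (phi : forall mu nu : I, X nu -> X mu) (A : forall mu, set (X mu))
  (Y : Type) (B : set Y) (psi : forall mu, Y -> X mu) : Prop :=
  [/\ (forall mu nu, (mu <= nu)%O -> phi mu nu @` A nu = A mu),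
      (forall mu x, A mu x -> phi mu mu x = x),
      (forall mu nu rho, (mu <= nu)%O -> (nu <= rho)%O ->
          forall x, A rho x -> phi mu nu (phi nu rho x) = phi mu rho x) &
    [/\ (forall mu, psi mu @` B = A mu),
      (forall mu nu, (mu <= nu)%O -> forall y, B y -> phi mu nu (psi nu y) = psi mu y) &
      (forall x : forall mu, X mu, (forall mu, A mu (x mu)) ->
          (forall mu nu, (mu <= nu)%O -> phi mu nu (x nu) = x mu) ->
          exists! y, B y /\ forall mu, psi mu y = x mu)]].

Definition Nd (X : topologicalType) (T Tinv : X -> X) (d : nat) : set {ptws 'I_d -> X} :=
  closure [set y : {ptws 'I_d -> X} | exists (z : X) (p q : int),
             y = (fun i : 'I_d => tpow T Tinv (p + (i.+1)%:Z * q) z)].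

Definition prodmap (Y X : Type) (d : nat) (f : Y -> X) : ('I_d -> Y) -> ('I_d -> X) :=
  fun y i => f (y i).
Arguments Nd {X} T Tinv d.
Arguments prodmap {Y X} d f.

From HB Require Import structures.
From mathcomp Require Import all_boot all_order all_algebra.
From mathcomp Require Import all_classical all_reals all_analysis.
Import Order.TTheory GRing.Theory Num.Theory.
Local Open Scope classical_set_scope.
Local Open Scope ring_scope.

(* A factor map phi intertwines the powers of T, so phi^(d) carries the
   generating orbit set of N_d onto the one of its target; as phi^(d) is a
   continuous map from a compact space to a Hausdorff one, it then carries
   N_d onto N_d, which gives the bonding conditions.  A compatible thread of
   points of the N_d(X_mu) has a unique coordinatewise lift to X_lambda^d,
   since the psi_mu jointly separate points.  The lift lies in N_d(X_lambda):
   the sets of points of N_d(X_lambda) over the mu-th term of the thread are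
   nested, closed and nonempty, so by compactness they have a common point. *)

Section PointwisePowers.
Variable d : nat.

Lemma continuous_prodmap (Y X : topologicalType) (f : Y -> X) :
  continuous f ->
  continuous (prodmap d f : {ptws 'I_d -> Y} -> {ptws 'I_d -> X}).
Proof.
move=> cf y; apply/cvg_sup; first by apply: fmap_filter; exact: nbhs_filter.
move=> i; apply: (@continuous_comp_initial ('I_d -> X) {ptws 'I_d -> Y} X
  (fun g => g i) (prodmap d f)) => z.
apply: continuous_comp; last exact: cf.
exact: (@proj_continuous _ (fun _ : 'I_d => Y) i).
Qed.

Lemma ptws_compact {X : topologicalType} :
  compact [set: X] -> compact [set: {ptws 'I_d -> X}].
Proof.
move=> cX.
have := @tychonoff _ (fun _ : 'I_d => X) (fun _ => [set: X]) (fun _ => cX).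
by congr compact; apply/seteqP; split.
Qed.

Lemma ptws_hausdorff {X : topologicalType} :
  hausdorff_space X -> hausdorff_space {ptws 'I_d -> X}.
Proof. by move=> hX; apply: (@hausdorff_product _ (fun _ : 'I_d => X)). Qed.

End PointwisePowers.

Lemma image_closure (T U : topologicalType) (f : T -> U) (A : set T) :
  continuous f -> compact [set: T] -> hausdorff_space U ->
  f @` closure A = closure (f @` A).
Proof.
move=> cf cT hU; apply/seteqP; split.
- suff : closure A `<=` f @^-1` closure (f @` A) by move=> sA _ [x /sA ? <-].
  rewrite closureE; apply: smallest_sub => [|x Ax].
    by apply: preimage_closed => [x _|]; [exact: cf | exact: closed_closure].
  by apply: subset_closure; exists x.
- rewrite closureE; apply: smallest_sub; last exact/image_subset/subset_closure.
  apply: compact_closed => //; apply: continuous_compact.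
    exact: continuous_subspaceT.
  by apply: (subclosed_compact _ cT) => //; exact: closed_closure.
Qed.

Lemma tpow_morph {Y X : Type} {S Sinv : Y -> Y} {T Tinv : X -> X} {f : Y -> X} :
  cancel Sinv S -> cancel T Tinv -> {morph f : y / S y >-> T y} ->
  forall n, {morph f : y / tpow S Sinv n y >-> tpow T Tinv n y}.
Proof.
move=> SinvK TK fS.
have fSinv y : f (Sinv y) = Tinv (f y) by rewrite -{2}(SinvK y) fS TK.
case=> k y /=; first by elim: k => //= k IH; rewrite fS IH.
by elim: k => /= [|k IH]; rewrite fSinv ?IH.
Qed.

Definition Nd_orbits {X : topologicalType} (T Tinv : X -> X) (d : nat)
    : set {ptws 'I_d -> X} :=
  [set y | exists (z : X) (p q : int),
     y = (fun i : 'I_d => tpow T Tinv (p + (i.+1)%:Z * q) z)].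
Arguments Nd_orbits {X} T Tinv d.

Lemma NdE (X : topologicalType) (T Tinv : X -> X) (d : nat) :
  Nd T Tinv d = closure (Nd_orbits T Tinv d).
Proof. by []. Qed.

Section FactorMapsOnNd.
Context {Y X : topologicalType} {S Sinv : Y -> Y} {T Tinv : X -> X} {f : Y -> X}.
Variable d : nat.
Hypotheses (SinvK : cancel Sinv S) (TK : cancel T Tinv).

Lemma prodmap_Nd_orbits :
  {morph f : y / S y >-> T y} -> f @` [set: Y] = [set: X] ->
  prodmap d f @` Nd_orbits S Sinv d = Nd_orbits T Tinv d.
Proof.
move=> fS fsurj.
have orbit_image z p q :
    prodmap d f (fun i : 'I_d => tpow S Sinv (p + (i.+1)%:Z * q) z)
    = (fun i : 'I_d => tpow T Tinv (p + (i.+1)%:Z * q) (f z)).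
  by apply: funext => i; rewrite /prodmap (tpow_morph SinvK TK fS).
apply/seteqP; split=> [_ [_ [z [p [q ->]]] <-] | _ [x [p [q ->]]]].
  by rewrite orbit_image; exists (f z), p, q.
have [z _ <-] : (f @` setT) x by rewrite fsurj.
exists (fun i : 'I_d => tpow S Sinv (p + (i.+1)%:Z * q) z); last exact: orbit_image.
by exists z, p, q.
Qed.

Lemma prodmap_Nd :
  compact [set: Y] -> hausdorff_space X -> factor_map S T f ->
  prodmap d f @` Nd S Sinv d = Nd T Tinv d.
Proof.
move=> cY hX [cf fsurj fS].
rewrite !NdE -prodmap_Nd_orbits //.
apply: (@image_closure _ _ (prodmap d f : {ptws 'I_d -> Y} -> {ptws 'I_d -> X})).
- exact: continuous_prodmap.
- exact: ptws_compact.
- exact: ptws_hausdorff.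
Qed.

End FactorMapsOnNd.

Lemma compact_Nd (X : topologicalType) (T Tinv : X -> X) (d : nat) :
  compact [set: X] -> compact (Nd T Tinv d).
Proof.
move=> cX; apply: (subclosed_compact _ (ptws_compact d cX)) => //.
exact: closed_closure.
Qed.

Lemma compact_nested_bigcap_neq0 {T : topologicalType} {dI : Order.disp_t}
    {I : orderType dI} {C : set T} {K : I -> set T} :
  compact C -> inhabited I -> (forall i, closed (K i)) ->
  (forall i, K i !=set0) -> (forall i, K i `<=` C) ->
  (forall i j, (i <= j)%O -> K j `<=` K i) ->
  \bigcap_i K i !=set0.
Proof.
move=> cC [i0] Kcl Kne KC Kdec.
have Kfilter : ProperFilter (filter_from [set: I] K).
  apply: filter_from_proper => [|i _]; last exact: Kne.
  apply: filter_from_filter => [|i j _ _]; first by exists i0.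
  have [le_ij|/ltW le_ji] := leP i j.
    by exists j => // x Kx; split => //; exact: Kdec Kx.
  by exists i => // x Kx; split => //; exact: Kdec Kx.
have [x [_ clx]] : C `&` cluster (filter_from [set: I] K) !=set0.
  by apply: cC; exists i0.
exists x => i _; rewrite (closure_id (K i)).1 // => B nB.
by apply: clx => //; exists i.
Qed.

Lemma inverse_limit_inj {dI : Order.disp_t} {I : porderType dI} {X : I -> Type}
    {phi : forall mu nu : I, X nu -> X mu} {A : forall mu, set (X mu)}
    {Y : Type} {B : set Y} {psi : forall mu, Y -> X mu} :
  inverse_limit phi A B psi ->
  forall y y', B y -> B y' -> (forall mu, psi mu y = psi mu y') -> y = y'.
Proof.
case=> _ _ _ [psiB psi_compat lift] y y' By By' eqy.
have Ay mu : A mu (psi mu y) by rewrite -psiB; exists y.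
have [z [_ z_uniq]] := lift _ Ay (fun mu nu le => psi_compat mu nu le y By).
rewrite -(z_uniq y) ?(z_uniq y') //.
by split=> // mu; rewrite eqy.
Qed.

Section InverseLimitPower.
Variables (dI : Order.disp_t) (I : orderType dI).
Variables (X : I -> topologicalType) (Y : topologicalType).
Variables (phi : forall mu nu : I, X nu -> X mu) (psi : forall mu : I, Y -> X mu).
Variables (d : nat) (A : forall mu, set {ptws 'I_d -> X mu}) (B : set {ptws 'I_d -> Y}).
Hypothesis hlim : inverse_limit phi (fun mu => [set: X mu]) [set: Y] psi.
Hypothesis psiB : forall mu, prodmap d (psi mu) @` B = A mu.

Lemma prodmap_psi_inj (w w' : {ptws 'I_d -> Y}) :
  (forall mu, prodmap d (psi mu) w = prodmap d (psi mu) w') -> w = w'.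
Proof.
move=> eqw; apply: funext => i; apply: (inverse_limit_inj hlim) => // mu.
exact: (congr1 (fun g => g i) (eqw mu)).
Qed.

Hypotheses (I_ne : inhabited I) (psi_cont : forall mu, continuous (psi mu)).
Hypotheses (X_haus : forall mu, hausdorff_space (X mu)).
Hypotheses (B_closed : closed B) (B_compact : compact B).

Lemma prodmap_thread_lift (x : forall mu, {ptws 'I_d -> X mu}) :
  (forall mu, A mu (x mu)) ->
  (forall mu nu, (mu <= nu)%O -> prodmap d (phi mu nu) (x nu) = x mu) ->
  exists2 w, B w & forall mu, prodmap d (psi mu) w = x mu.
Proof.
case: hlim => _ _ _ [_ psi_compat _] Ax x_compat.
pose K mu := B `&` (prodmap d (psi mu) : {ptws 'I_d -> Y} -> {ptws 'I_d -> X mu})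
  @^-1` [set x mu].
have [w Kw] : \bigcap_mu K mu !=set0.
  apply: (compact_nested_bigcap_neq0 B_compact I_ne) => [mu|mu|mu|mu nu le w []].
  - apply: closedI B_closed _; apply: preimage_closed.
      by move=> w _; apply: continuous_prodmap.
    exact/accessible_closed_set1/hausdorff_accessible/ptws_hausdorff.
  - by move: (Ax mu); rewrite -psiB => -[w Bw psiw]; exists w.
  - by move=> w [].
  - move=> Bw /= psiw; split=> //=; rewrite -(x_compat mu nu le) -psiw.
    by apply: funext => i; apply/esym/psi_compat.
have [i0] := I_ne.
by exists w => [|mu]; [exact: (Kw i0 Logic.I).1 | exact: (Kw mu Logic.I).2].
Qed.

Hypothesis phiA :
  forall mu nu, (mu <= nu)%O -> prodmap d (phi mu nu) @` A nu = A mu.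

Theorem inverse_limit_prodmap :
  inverse_limit (X := fun mu => {ptws 'I_d -> X mu})
    (fun mu nu => prodmap d (phi mu nu)) A B (fun mu => prodmap d (psi mu)).
Proof.
have [_ phi_id phi_comp [_ psi_compat _]] := hlim.
split=> //.
- by move=> mu x _; apply: funext => i; exact: phi_id.
- by move=> mu nu rho le1 le2 x _; apply: funext => i; exact: phi_comp.
split=> //.
- by move=> mu nu le w _; apply: funext => i; exact: psi_compat.
move=> x Ax x_compat; have [w Bw psiw] := prodmap_thread_lift x Ax x_compat.
exists w; split=> // w' [_ psiw'].
by apply: prodmap_psi_inj => mu; rewrite psiw psiw'.
Qed.

End InverseLimitPower.

Theorem lemma5p6
  (* the ordinals mu < lambda, lambda a (nonzero) limit ordinal: a nonempty
     well-ordered type without a largest element *)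
  (dI : Order.disp_t) (I : orderType dI)
  (I_wf : well_founded (fun a b : I => (a < b)%O))
  (I_ne : inhabited I)
  (I_nomax : forall mu : I, exists nu : I, (mu < nu)%O)
  (* the systems (X_mu, T), mu < lambda *)
  (X : I -> topologicalType) (T Tinv : forall mu, X mu -> X mu)
  (* the system (X_lambda, T) *)
  (XL : topologicalType) (TL TLinv : XL -> XL)
  (phi : forall mu nu : I, X nu -> X mu) (psi : forall mu : I, XL -> X mu)
  (hX : forall mu, tds (T mu) (Tinv mu) /\ minimal (T mu))
  (hXL : tds TL TLinv /\ minimal TL)
  (hphi : forall mu nu : I, (mu <= nu)%O -> factor_map (T nu) (T mu) (phi mu nu))
  (hpsi : forall mu : I, factor_map TL (T mu) (psi mu))
  (hlim : inverse_limit phi (fun mu => [set: X mu]) [set: XL] psi) :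
  forall d : nat,
    inverse_limit (X := fun mu => {ptws 'I_d -> X mu})
      (fun mu nu => prodmap d (phi mu nu))
      (fun mu => Nd (T mu) (Tinv mu) d)
      (Nd TL TLinv d)
      (fun mu => prodmap d (psi mu)).
Proof.
move=> d; have [[cXL _ _ _ [_ TLinvK]] _] := hXL.
have X_haus mu : hausdorff_space (X mu) by have [[]] := hX mu.
have TK mu : cancel (T mu) (Tinv mu) by have [[_ _ _ _ []]] := hX mu.
have TinvK mu : cancel (Tinv mu) (T mu) by have [[_ _ _ _ []]] := hX mu.
have cX mu : compact [set: X mu] by have [[]] := hX mu.
apply: inverse_limit_prodmap => //.
- move=> mu; exact: prodmap_Nd d TLinvK (TK mu) cXL (X_haus mu) (hpsi mu).
- by move=> mu; have [] := hpsi mu.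
- exact: closed_closure.
- exact: compact_Nd.
- move=> mu nu le.
  exact: prodmap_Nd d (TinvK nu) (TK mu) (cX nu) (X_haus mu) (hphi _ _ le).
Qed.
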